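(* Let $\mathcal{D}_{\text{SEQ}}$ be a temporal sequence database, $\delta$ a minimum confidence threshold, and let $P$ and $P'$ be two temporal patterns. If $P'\subseteq P$ and $\dfrac{\textit{supp}(P')}{\max_{E_k\in P}\textit{supp}(E_k)}\le\delta$, then $\textit{conf}(P)\le\delta$.
   Context: A temporal event is a pair $E=(\omega,T)$ with $\omega$ a symbol and $T$ a set of time intervals; an instance is $e=(\omega,[t_s,t_e])$ with $[t_s,t_e]\in T$, and $E_{\triangleright e}$ denotes that $e$ is an instance of $E$. $\Re=\{\text{Follows},\text{Contains},\text{Overlaps}\}$ is a set of relations on pairs of instances defined by endpoint conditions (buffer $\epsilon>0$, minimal overlap $d_o$, paper's notation $t\pm\epsilon$): Follows iff $t_{e_i}\pm\epsilon\le t_{s_j}$; Contains iff $(t_{s_i}\le t_{s_j})\wedge(t_{e_i}\pm\epsilon\ge t_{e_j})$; Overlaps iff $(t_{s_i}<t_{s_j})\wedge(t_{e_i}\pm\epsilon<t_{e_j})\wedge(t_{e_i}-t_{s_j}\ge d_o\pm\epsilon)$. A temporal pattern is a list of triples $(r_{ij},E_i,E_j)$ with $r_{ij}\in\Re$; $E\in P$ means $E$ occurs in a triple of $P$; $P'\subseteq P$ means $P'$ is a sub-pattern of $P$ (every triple of $P'$ is a triple of $P$). A temporal sequence is a list of instances ordered by start time; $\mathcal{D}_{\text{SEQ}}$ is a finite collection of temporal sequences. $S$ supports $P$ iff $|S|\ge2$ and for every triple $(r_{ij},E_i,E_j)$ of $P$ there exist instances $e_l,e_m$ in $S$ with $r_{ij}$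 holding between $E_{i_{\triangleright e_l}}$ and $E_{j_{\triangleright e_m}}$. $\textit{supp}(P)$ = number of sequences of $\mathcal{D}_{\text{SEQ}}$ supporting $P$; $\textit{supp}(E)$ = number of sequences containing an instance of $E$; $\textit{conf}(P)=\textit{supp}(P)/\max_{E_k\in P}\textit{supp}(E_k)$. *)

From Stdlib Require Import Reals List Sorting.Sorted ClassicalEpsilon.
Import ListNotations.
Open Scope R_scope.

Set Implicit Arguments.

(** A temporal event E = (omega, T): a symbol and a set of time intervals
    (an interval [ts,te] is represented by the pair (ts,te)). *)
Record event (Sym : Type) := Event { ev_sym : Sym ; ev_T : (R * R) -> Prop }.

Record instance (Sym : Type) := Inst { in_sym : Sym ; in_ts : R ; in_te : R }.

Definition instance_of (Sym : Type) (E : event Sym) (e : instance Sym) : Prop :=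
  in_sym e = ev_sym E /\ ev_T E (in_ts e, in_te e).

Inductive relation := Follows | Contains | Overlaps.

(** Endpoint conditions, with buffer eps and minimal overlap d_o.
    READING: "t +- eps" is read as a tolerance of eps in the direction
    favouring the relation. *)
Definition holds (Sym : Type) (eps d_o : R) (r : relation)
    (ei ej : instance Sym) : Prop :=
  match r with
  | Follows  => in_te ei - eps <= in_ts ej
  | Contains => in_ts ei <= in_ts ej /\ in_te ei + eps >= in_te ej
  | Overlaps => in_ts ei < in_ts ej /\ in_te ei - eps < in_te ej
                /\ in_te ei - in_ts ej >= d_o - eps
  end.

Definition pattern (Sym : Type) := list (relation * event Sym * event Sym).

Definition subpattern (Sym : Type) (P' P : pattern Sym) : Prop :=
  forall t, In t P' -> In t P.

Definition events_of (Sym : Type) (P : pattern Sym) : list (event Sym) :=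
  flat_map (fun t => let '(_, Ei, Ej) := t in [Ei; Ej]) P.

Definition tseq (Sym : Type) := list (instance Sym).

Definition ordered_seq (Sym : Type) (S : tseq Sym) : Prop :=
  Sorted (fun a b => in_ts a <= in_ts b) S.

Definition supports (Sym : Type) (eps d_o : R) (S : tseq Sym) (P : pattern Sym)
  : Prop :=
  (2 <= length S)%nat /\
  forall r Ei Ej, In (r, Ei, Ej) P ->
    exists el em, In el S /\ In em S /\
      instance_of Ei el /\ instance_of Ej em /\ holds eps d_o r el em.

Definition count_prop (A : Type) (Q : A -> Prop) (D : list A) : nat :=
  fold_right (fun x n => if excluded_middle_informative (Q x) then S n else n)
    O D.

Definition supp (Sym : Type) (eps d_o : R) (D : list (tseq Sym)) (P : pattern Sym)
  : nat := count_prop (fun S => supports eps d_o S P) D.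

Definition supp_event (Sym : Type) (D : list (tseq Sym)) (E : event Sym) : nat :=
  count_prop (fun S : tseq Sym => exists e, In e S /\ instance_of E e) D.

Definition max_event_supp (Sym : Type) (D : list (tseq Sym)) (P : pattern Sym)
  : nat := fold_right Nat.max O (map (supp_event D) (events_of P)).

Definition conf (Sym : Type) (eps d_o : R) (D : list (tseq Sym)) (P : pattern Sym)
  : R := INR (supp eps d_o D P) / INR (max_event_supp D P).

(* Support is anti-monotone in the pattern: a sequence witnessing every triple
   of P in particular witnesses every triple of a sub-pattern P', so
   supp(P) <= supp(P'), and dividing both by the same maximal event support
   bounds conf(P) by the given ratio. *)

From Stdlib Require Import Reals List Lia Lra ClassicalEpsilon.
Open Scope R_scope.

Lemma count_prop_mono (A : Type) (Q1 Q2 : A -> Prop) (D : list A) :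
  (forall x, Q1 x -> Q2 x) -> (count_prop Q1 D <= count_prop Q2 D)%nat.
Proof.
  intros HQ; induction D as [|x D IH]; simpl; [lia|].
  destruct (excluded_middle_informative (Q1 x)) as [H1|H1];
  destruct (excluded_middle_informative (Q2 x)) as [H2|H2]; try lia.
  exfalso; auto.
Qed.

Lemma supports_subpattern (Sym : Type) (eps d_o : R) (S : tseq Sym)
    (P P' : pattern Sym) :
  subpattern P' P -> supports eps d_o S P -> supports eps d_o S P'.
Proof.
  intros Hsub [Hlen Hwit]; split; [exact Hlen|].
  intros r Ei Ej Hin; apply Hwit, Hsub, Hin.
Qed.

Lemma supp_subpattern_le (Sym : Type) (eps d_o : R) (D : list (tseq Sym))
    (P P' : pattern Sym) :
  subpattern P' P -> (supp eps d_o D P <= supp eps d_o D P')%nat.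
Proof.
  intros Hsub; apply count_prop_mono; intros S; apply supports_subpattern, Hsub.
Qed.

(* Also valid for [n = 0], where both sides are [0] since [/ 0 = 0]. *)
Lemma Rdiv_INR_le_compat (a b : R) (n : nat) :
  a <= b -> a / INR n <= b / INR n.
Proof.
  intros Hab; unfold Rdiv; apply Rmult_le_compat_r; [|exact Hab].
  destruct n as [|n].
  - rewrite INR_0, Rinv_0; lra.
  - left; apply Rinv_pos, lt_0_INR; lia.
Qed.

Theorem lemma7 (Sym : Type) (eps d_o : R) (D : list (tseq Sym))
    (delta : R) (P P' : pattern Sym) :
  0 < eps ->
  (forall S, In S D -> ordered_seq S) ->
  subpattern P' P ->
  INR (supp eps d_o D P') / INR (max_event_supp D P) <= delta ->
  conf eps d_o D P <= delta.
Proof.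
  intros _ _ Hsub Hratio.
  unfold conf; eapply Rle_trans; [|exact Hratio].
  apply Rdiv_INR_le_compat, le_INR, supp_subpattern_le, Hsub.
Qed.
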